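(* Let $X$ be a homogeneous chain and $J$ a proper regular interval of $X$; put $J^-=\{t\in X\mid t<x\ \forall x\in J\}$, $J^+=\{t\in X\mid t>x\ \forall x\in J\}$ and $H=\{g\in\mathrm{Aut}(X)\mid g(x)\in J\ \forall x\in J\}$. Then: (1) $H$ is an open subgroup of $(\mathrm{Aut}(X),\tau_p)$, and hence of $(\mathrm{Aut}(X),\tau_\partial)$; (2) $(H,\tau_p)\cong(\mathrm{Aut}(J^-),\tau_p)\times(\mathrm{Aut}(J),\tau_p)\times(\mathrm{Aut}(J^+),\tau_p)$ and $(H,\tau_\partial)\cong(\mathrm{Aut}(J^-),\tau_\partial)\times(\mathrm{Aut}(J),\tau_\partial)\times(\mathrm{Aut}(J^+),\tau_\partial)$ as topological groups; (3) for every $x\in J$, the stabilizer of $x$ for the action $\mathrm{Aut}(X)\curvearrowright X$ equals $\mathrm{Aut}(J^-)\times \mathrm{St}^J_x\times\mathrm{Aut}(J^+)$, where $\mathrm{St}^J_x$ is the stabilizer of $x$ for the action $\mathrm{Aut}(J)\curvearrowright J$.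
   Context: Chain: linearly ordered set; $\mathrm{Aut}(Y)$: group of order-preserving bijections of a chain $Y$; $X$ homogeneous: $\mathrm{Aut}(X)$ transitive. An interval is a convex subset; an interval $J$ is regular if for all $x,y\in J$ and $g\in\mathrm{Aut}(X)$, $g(x)\in J$ implies $g(y)\in J$; it is proper if it is neither a singleton nor $X$. Automorphisms of $J^-$, $J$, $J^+$ are identified with automorphisms of $X=J^-\cup J\cup J^+$ that are the identity on the other two parts. For a chain $Y$, $\tau_p$ on $\mathrm{Aut}(Y)$ is the topology of pointwise convergence w.r.t. the order topology on $Y$, and $\tau_\partial$ is the permutation topology (identity neighbourhood base: pointwise stabilizers of finite subsets of $Y$). *)

From mathcomp Require Import all_boot all_order.
From Stdlib Require List.
Set Implicit Arguments. Unset Strict Implicit. Unset Printing Implicit Defensive.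
Import Order.TTheory.
Local Open Scope order_scope.

Section ChainDefs.
Variables (d : Order.disp_t) (T : orderType d).

(* Automorphisms of the subchain Y of T, identified (as in the paper) with
   automorphisms of T that are the identity outside Y: g maps Y onto Y and is an
   order isomorphism of Y. *)
Definition is_aut_on (Y : T -> Prop) (g : T -> T) : Prop :=
  [/\ (forall x, ~ Y x -> g x = x),
      (forall x, Y x -> Y (g x)),
      (forall y, Y y -> exists2 x, Y x & g x = y)
    & (forall x y, Y x -> Y y -> (g x <= g y) = (x <= y))].

Definition is_aut (g : T -> T) : Prop := is_aut_on (fun _ => True) g.

Definition homogeneous : Prop := forall x y : T, exists2 g, is_aut g & g x = y.

Definition is_interval (J : T -> Prop) : Prop :=
  (exists x, J x) /\ (forall x y z, J x -> J z -> x <= y -> y <= z -> J y).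

Definition regular_int (J : T -> Prop) : Prop :=
  forall x y g, J x -> J y -> is_aut g -> J (g x) -> J (g y).

Definition proper_int (J : T -> Prop) : Prop :=
  ~ (exists x, forall y, J y <-> y = x) /\ ~ (forall y, J y).

Definition lower (J : T -> Prop) (t : T) : Prop := forall x, J x -> t < x.
Definition upper (J : T -> Prop) (t : T) : Prop := forall x, J x -> x < t.

Definition setstab (J : T -> Prop) (g : T -> T) : Prop :=
  is_aut g /\ forall x, J x -> J (g x).

End ChainDefs.

(* Topology on the ambient set X generated by the subbasis S (finite
   intersections of members of S, within X, form a basis; the empty
   intersection is X itself). *)
Definition gen_open {A : Type} (X : A -> Prop) (S : (A -> Prop) -> Prop)
  (U : A -> Prop) : Prop :=
  (forall a, U a -> X a) /\
  forall a, U a -> exists s : seq (A -> Prop),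
    [/\ (forall V, List.In V s -> S V), (forall V, List.In V s -> V a)
      & (forall b, X b -> (forall V, List.In V s -> V b) -> U b)].

Definition sub_open {A : Type} (B : A -> Prop) (op : (A -> Prop) -> Prop)
  (U : A -> Prop) : Prop :=
  exists2 V, op V & forall a, U a <-> (B a /\ V a).

Section Topologies.
Variables (d : Order.disp_t) (T : orderType d).

Definition ray_subbasis (Y : T -> Prop) (V : T -> Prop) : Prop :=
  exists2 a, Y a &
    ((forall z, V z <-> (Y z /\ z < a)) \/ (forall z, V z <-> (Y z /\ a < z))).

Definition order_open (Y : T -> Prop) : (T -> Prop) -> Prop :=
  gen_open Y (ray_subbasis Y).

(* tau_p on Aut(Y): pointwise convergence w.r.t. the order topology of Y
   (subspace of the product topology on Y^Y). *)
Definition tau_p (Y : T -> Prop) : ((T -> T) -> Prop) -> Prop :=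
  gen_open (is_aut_on Y)
    (fun V => exists y O, [/\ Y y, order_open Y O
                           & forall h, V h <-> (is_aut_on Y h /\ O (h y))]).

(* tau_partial on Aut(Y): permutation topology; U is open iff each g in U has
   a basic neighbourhood g * Stab(F) inside U, F a finite subset of Y. *)
Definition tau_d (Y : T -> Prop) (U : (T -> T) -> Prop) : Prop :=
  (forall g, U g -> is_aut_on Y g) /\
  forall g, U g -> exists s : seq T,
    (forall y, List.In y s -> Y y) /\
    (forall h, is_aut_on Y h -> (forall y, List.In y s -> h y = y) -> U (g \o h)).

End Topologies.

Section Groups.
Variable (A : Type).

Definition subgroup (G H : (A -> A) -> Prop) : Prop :=
  [/\ (forall g, H g -> G g), H id,
      (forall g h, H g -> H h -> H (g \o h))
    & (forall g g', H g -> cancel g g' -> cancel g' g -> H g')].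

Definition triple := ((A -> A) * (A -> A) * (A -> A))%type.

Definition in3 (A1 A2 A3 : (A -> A) -> Prop) (p : triple) : Prop :=
  [/\ A1 p.1.1, A2 p.1.2 & A3 p.2].

Definition prod3_open (A1 A2 A3 : (A -> A) -> Prop)
  (o1 o2 o3 : ((A -> A) -> Prop) -> Prop) : (triple -> Prop) -> Prop :=
  gen_open (in3 A1 A2 A3)
    (fun V => exists O,
       [\/ o1 O /\ (forall p, V p <-> (in3 A1 A2 A3 p /\ O p.1.1)),
           o2 O /\ (forall p, V p <-> (in3 A1 A2 A3 p /\ O p.1.2))
         | o3 O /\ (forall p, V p <-> (in3 A1 A2 A3 p /\ O p.2))]).

Definition mul3 (p q : triple) : triple :=
  (p.1.1 \o q.1.1, p.1.2 \o q.1.2, p.2 \o q.2).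

Definition topgrp_iso3 (H : (A -> A) -> Prop) (oH : ((A -> A) -> Prop) -> Prop)
  (A1 A2 A3 : (A -> A) -> Prop) (oP : (triple -> Prop) -> Prop)
  (f : (A -> A) -> triple) (f' : triple -> (A -> A)) : Prop :=
  [/\ (forall g, H g -> in3 A1 A2 A3 (f g)),
      (forall p, in3 A1 A2 A3 p -> H (f' p)),
      (forall g, H g -> f' (f g) = g)
    & (forall p, in3 A1 A2 A3 p -> f (f' p) = p)] /\
  [/\ (forall g h, H g -> H h -> f (g \o h) = mul3 (f g) (f h)),
      (forall O, oP O -> oH (fun g => H g /\ O (f g)))
    & (forall O, oH O -> oP (fun p => in3 A1 A2 A3 p /\ O (f' p)))].

End Groups.

(* An automorphism g lies in H as soon as g x0 lies in J for a single x0 in J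
   (regularity).  Homogeneity moves a point of J to any other one, and since J is
   not a singleton this shows that J has no least or greatest element; hence H
   contains the tau_p-neighbourhood {g | a < g x0 < b} (a, b in J) of each of its
   points, and the pointwise stabiliser of x0.  Every g in H also preserves J^-
   and J^+, and X is the disjoint union of the three convex parts J^-, J, J^+,
   so g is the composite of its three restrictions.  Restriction and composition
   are continuous for both topologies because a basic open set constrains
   finitely many points, each of which lies in exactly one part. *)

From mathcomp Require Import all_boot all_order.
From Stdlib Require Import ClassicalEpsilon FunctionalExtensionality Classical.
Set Implicit Arguments. Unset Strict Implicit. Unset Printing Implicit Defensive.
Import Order.TTheory.
Local Open Scope order_scope.

(** * Topologies given by a subbasis *)

Section Subbasis.
Variable A : Type.
Implicit Types (X P Q U V : A -> Prop) (S : (A -> Prop) -> Prop).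

(* [gen_open X S U] unfolds to
   [(forall a, U a -> X a) /\ forall a, U a -> gen_nbhd X S a U]. *)
Definition gen_nbhd X S (a : A) P : Prop :=
  exists s : seq (A -> Prop), [/\ (forall V, List.In V s -> S V),
    (forall V, List.In V s -> V a)
  & (forall b, X b -> (forall V, List.In V s -> V b) -> P b)].

Lemma gen_nbhd_mono X S a P Q :
  (forall b, X b -> P b -> Q b) -> gen_nbhd X S a P -> gen_nbhd X S a Q.
Proof. by move=> PQ [s [sS sa sP]]; exists s; split=> // b Xb /(sP b Xb); apply: PQ. Qed.

Lemma gen_nbhdT X S a : gen_nbhd X S a (fun _ => True).
Proof. by exists [::]. Qed.

Lemma gen_nbhdI X S a P Q :
  gen_nbhd X S a P -> gen_nbhd X S a Q -> gen_nbhd X S a (fun b => P b /\ Q b).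
Proof.
move=> [s [sS sa sP]] [t [tS ta tQ]]; exists (s ++ t).
have inE V : List.In V (s ++ t) <-> List.In V s \/ List.In V t by apply: List.in_app_iff.
split=> [V /inE[/sS|/tS] //|V /inE[/sa|/ta] //|b Xb st].
by split; [apply: sP | apply: tQ] => // V Vin; apply: st; apply/inE; tauto.
Qed.

Lemma gen_nbhd_all (I : Type) X S a (s : seq I) (F : I -> A -> Prop) :
  (forall i, List.In i s -> gen_nbhd X S a (F i)) ->
  gen_nbhd X S a (fun b => forall i, List.In i s -> F i b).
Proof.
elim: s => [|i s IH] Fs; first exact: gen_nbhd_mono (gen_nbhdT X S a).
have := gen_nbhdI (Fs i (or_introl erefl)) (IH (fun j js => Fs j (or_intror js))).
by apply: gen_nbhd_mono => b _ [Fib Fsb] j [<-|/Fsb].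
Qed.

Lemma gen_nbhd_subbasic X S a V : S V -> V a -> gen_nbhd X S a V.
Proof.
move=> SV Va; exists [:: V]; split=> [W [<-|[]] //|W [<-|[]] //|b _ Vb].
exact: Vb (or_introl erefl).
Qed.

Lemma gen_nbhd_interior X S a P : X a -> gen_nbhd X S a P ->
  exists U, [/\ gen_open X S U, U a & forall b, U b -> P b].
Proof.
move=> Xa [s [sS sa sP]]; exists (fun b => X b /\ forall V, List.In V s -> V b).
split=> [|//|b [Xb sb]]; last exact: sP.
by split=> [b []//|b [Xb sb]]; exists s.
Qed.

Lemma gen_openT X S : gen_open X S X.
Proof. by split=> // a _; apply: gen_nbhd_mono (gen_nbhdT X S a). Qed.

Lemma gen_open_subbasic X S V : S V -> (forall a, V a -> X a) -> gen_open X S V.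
Proof. by move=> SV VX; split=> // a; apply: gen_nbhd_subbasic. Qed.

Lemma gen_open_ext X S U V : (forall a, U a <-> V a) -> gen_open X S U -> gen_open X S V.
Proof.
move=> UV [UX oU]; split=> [a /UV/UX //|a /UV/oU].
by apply: gen_nbhd_mono => b _ /UV.
Qed.

End Subbasis.

Lemma gen_open_preimage (A B : Type) (X1 : A -> Prop) S1 (D : A -> Prop) (phi : A -> B)
    (X2 : B -> Prop) S2 U :
  gen_open X1 S1 D -> (forall a, D a -> X2 (phi a)) ->
  (forall V a, S2 V -> D a -> V (phi a) ->
     gen_nbhd X1 S1 a (fun b => D b -> V (phi b))) ->
  gen_open X2 S2 U -> gen_open X1 S1 (fun a => D a /\ U (phi a)).
Proof.
move=> [DX oD] DX2 phiS [_ oU]; split=> [a [/DX //]|a [Da Ua]].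
have [s [sS sa sU]] := oU _ Ua.
have := gen_nbhdI (oD a Da)
  (gen_nbhd_all (fun V Vs => phiS V a (sS V Vs) Da (sa V Vs))).
apply: gen_nbhd_mono => b _ [Db sb]; split=> //.
by apply: sU => [|V /sb]; [exact: DX2|apply].
Qed.

Lemma list_trace (B : Type) (P : B -> Prop) (s : seq B) : exists s',
  (forall y, List.In y s' -> P y) /\ (forall y, List.In y s -> P y -> List.In y s').
Proof.
elim: s => [|a s [s' [s'P ss']]]; first by exists [::].
have [Pa|nPa] := classic (P a).
  exists (a :: s'); split=> [y [<-|/s'P]|y [<-|/ss' ys] Py] //; first by left.
  by right; apply: ys.
by exists s'; split=> // y [<-|/ss'] //.
Qed.

Lemma list_choice_mono (B C : Type) (s : seq B) (Q : B -> seq C -> Prop) :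
  (forall b l l', Q b l -> (forall c, List.In c l -> List.In c l') -> Q b l') ->
  (forall b, List.In b s -> exists l, Q b l) ->
  exists l, forall b, List.In b s -> Q b l.
Proof.
move=> Qmono; elim: s => [|b s IH] Qs; first by exists [::].
have [l1 Ql1] := Qs b (or_introl erefl).
have [l2 Ql2] := IH (fun b' bs => Qs b' (or_intror bs)).
exists (l1 ++ l2) => b' [<-|/Ql2 Qb']; [apply: Qmono Ql1 _|apply: Qmono Qb' _];
  by move=> c cl; apply/List.in_app_iff; tauto.
Qed.

(** * Automorphisms of subchains *)

Section Automorphisms.
Variables (d : Order.disp_t) (T : orderType d).
Implicit Types (Y Z : T -> Prop) (g h : T -> T).

Definition convex Y := forall x y z, Y x -> Y z -> x <= y -> y <= z -> Y y.

Lemma aut_on_out Y g x : is_aut_on Y g -> ~ Y x -> g x = x.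
Proof. by case=> + _ _ _; apply. Qed.

Lemma aut_on_in Y g x : is_aut_on Y g -> Y x -> Y (g x).
Proof. by case=> _ + _ _; apply. Qed.

Lemma aut_on_le Y g x y : is_aut_on Y g -> Y x -> Y y -> (g x <= g y) = (x <= y).
Proof. by case=> _ _ _; apply. Qed.

Lemma aut_on_lt Y g x y : is_aut_on Y g -> Y x -> Y y -> (g x < g y) = (x < y).
Proof. by move=> ag Yx Yy; rewrite !ltNge (aut_on_le ag). Qed.

Lemma aut_on_memE Y g : is_aut_on Y g -> forall x, Y (g x) <-> Y x.
Proof.
move=> ag x; split=> [Ygx|Yx]; last exact: aut_on_in ag Yx.
by have [//|nYx] := classic (Y x); rewrite (aut_on_out ag nYx) in Ygx.
Qed.

Lemma aut_on_inj Y g : is_aut_on Y g -> injective g.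
Proof.
move=> ag x y gxy; have [Yx|nYx] := classic (Y x).
  have Yy : Y y by apply/(aut_on_memE ag); rewrite -gxy; exact: aut_on_in ag Yx.
  by apply/le_anti; rewrite -(aut_on_le ag Yx Yy) -(aut_on_le ag Yy Yx) gxy lexx.
have nYy : ~ Y y by move=> /(aut_on_memE ag); rewrite -gxy => /(aut_on_memE ag).
by rewrite -(aut_on_out ag nYx) gxy (aut_on_out ag nYy).
Qed.

Lemma aut_on_surj Y g : is_aut_on Y g -> forall y, exists x, g x = y.
Proof.
case=> gout _ gonto _ y; have [Yy|nYy] := classic (Y y).
  by have [x _ <-] := gonto y Yy; exists x.
by exists y; apply: gout.
Qed.

Lemma aut_on_comp Y g h : is_aut_on Y g -> is_aut_on Y h -> is_aut_on Y (g \o h).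
Proof.
move=> ag ah; split=> [x nYx|x Yx|z Yz|x y Yx Yy] /=.
- by rewrite !(aut_on_out _ nYx).
- exact: aut_on_in ag (aut_on_in ah Yx).
- case: ag ah => _ _ gonto _ [_ _ honto _].
  by have [y Yy <-] := gonto z Yz; have [x Yx <-] := honto y Yy; exists x.
- by rewrite (aut_on_le ag) ?(aut_on_le ah) //; apply: aut_on_in ah _.
Qed.

Lemma aut_on_id Y : is_aut_on Y id.
Proof. by split=> // y Yy; exists y. Qed.

Lemma aut_on_of_cancel Y g g' :
  is_aut_on Y g -> cancel g g' -> cancel g' g -> is_aut_on Y g'.
Proof.
move=> ag gK g'K.
have Yg' x : Y x -> Y (g' x) by move=> Yx; apply/(aut_on_memE ag); rewrite g'K.
split=> [x nYx|//|y Yy|x y Yx Yy].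
- by rewrite -{1}(aut_on_out ag nYx) gK.
- by exists (g y); [exact: aut_on_in ag Yy | rewrite gK].
- by rewrite -(aut_on_le ag) ?g'K //; apply: Yg'.
Qed.

Lemma aut_on_inv Y g : is_aut_on Y g ->
  exists g', [/\ is_aut_on Y g', cancel g g' & cancel g' g].
Proof.
move=> ag; pose pre y := constructive_indefinite_description _ (aut_on_surj ag y).
have g'K : cancel (fun y => proj1_sig (pre y)) g by move=> y; case: (pre y).
have gK : cancel g (fun y => proj1_sig (pre y)).
  by move=> x; apply: (aut_on_inj ag); rewrite g'K.
by exists (fun y => proj1_sig (pre y)); split=> //; apply: aut_on_of_cancel gK g'K.
Qed.

Lemma convex_side Y a y : convex Y -> Y a -> ~ Y y ->
  (forall b, Y b -> b < y) \/ (forall b, Y b -> y < b).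
Proof.
move=> cY Ya nYy; case: (leP a y) => [ay|ya]; [left|right] => b Yb.
  by case: (ltP b y) => // yb; case: nYy; apply: cY Ya Yb ay yb.
by case: (ltP y b) => // b_y; case: nYy; apply: cY Yb Ya b_y (ltW ya).
Qed.

Lemma convex_out_le Y a b y : convex Y -> Y a -> Y b -> ~ Y y ->
  ((a <= y) = (b <= y)) /\ ((y <= a) = (y <= b)).
Proof.
move=> cY Ya Yb nYy; case: (convex_side cY Ya nYy) => side.
  by rewrite !leNgt (side a Ya) (side b Yb) (lt_gtF (side a Ya)) (lt_gtF (side b Yb)).
by rewrite !leNgt (side a Ya) (side b Yb) (lt_gtF (side a Ya)) (lt_gtF (side b Yb)).
Qed.

Lemma aut_on_convex Y g : convex Y -> is_aut_on Y g -> is_aut g.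
Proof.
move=> cY ag; split=> // [y _|x y _ _].
  by have [x gx] := aut_on_surj ag y; exists x.
have [Yx|nYx] := classic (Y x); have [Yy|nYy] := classic (Y y).
- exact: aut_on_le ag Yx Yy.
- by rewrite (aut_on_out ag nYy); case: (convex_out_le cY (aut_on_in ag Yx) Yx nYy).
- by rewrite (aut_on_out ag nYx); case: (convex_out_le cY (aut_on_in ag Yy) Yy nYx).
- by rewrite (aut_on_out ag nYx) (aut_on_out ag nYy).
Qed.

Lemma aut_lower Z g x : is_aut g -> (forall z, Z (g z) <-> Z z) ->
  lower Z (g x) <-> lower Z x.
Proof.
move=> ag gZ; split=> low y Zy.
  by rewrite -(aut_on_lt ag) //; apply: (low (g y)); apply/gZ.
have [z gz] := aut_on_surj ag y; rewrite -gz (aut_on_lt ag) //.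
by apply: low; apply/gZ; rewrite gz.
Qed.

Lemma aut_upper Z g x : is_aut g -> (forall z, Z (g z) <-> Z z) ->
  upper Z (g x) <-> upper Z x.
Proof.
move=> ag gZ; split=> up y Zy.
  by rewrite -(aut_on_lt ag) //; apply: (up (g y)); apply/gZ.
have [z gz] := aut_on_surj ag y; rewrite -gz (aut_on_lt ag) //.
by apply: up; apply/gZ; rewrite gz.
Qed.

Definition restr Y g : T -> T :=
  fun x => if excluded_middle_informative (Y x) then g x else x.

Lemma restr_in Y g x : Y x -> restr Y g x = g x.
Proof. by rewrite /restr; case: excluded_middle_informative. Qed.

Lemma restr_out Y g x : ~ Y x -> restr Y g x = x.
Proof. by rewrite /restr; case: excluded_middle_informative. Qed.

Lemma restr_agree Y g h x : g x = h x -> restr Y g x = restr Y h x.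
Proof. by rewrite /restr => ->. Qed.

Lemma restr_aut_on Y g : is_aut g -> (forall x, Y (g x) <-> Y x) ->
  is_aut_on Y (restr Y g).
Proof.
move=> ag gY; split=> [x /restr_out //|x Yx|y Yy|x y Yx Yy].
- by rewrite restr_in //; apply/gY.
- have [x gx] := aut_on_surj ag y.
  have Yx : Y x by apply/gY; rewrite gx.
  by exists x; rewrite ?restr_in.
- by rewrite !restr_in // (aut_on_le ag).
Qed.

Lemma restr_comp Y g h : (forall x, Y x -> Y (h x)) ->
  restr Y (g \o h) = restr Y g \o restr Y h.
Proof.
move=> hY; apply: functional_extensionality => x /=.
have [Yx|nYx] := classic (Y x); first by rewrite !restr_in //; apply: hY.
by rewrite !restr_out.
Qed.

Lemma restr_aut_onE Y g k : is_aut_on Y k -> (forall y, Y y -> g y = k y) ->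
  restr Y g = k.
Proof.
move=> ak gk; apply: functional_extensionality => x.
have [Yx|nYx] := classic (Y x); first by rewrite restr_in // gk.
by rewrite restr_out // (aut_on_out ak nYx).
Qed.

Definition tau_p_subbasis Y (V : (T -> T) -> Prop) : Prop :=
  exists y O, [/\ Y y, order_open Y O & forall h, V h <-> (is_aut_on Y h /\ O (h y))].

Lemma tau_p_nbhd_eval Y y O g : Y y -> order_open Y O -> is_aut_on Y g -> O (g y) ->
  gen_nbhd (is_aut_on Y) (tau_p_subbasis Y) g (fun h => O (h y)).
Proof.
move=> Yy oO ag Ogy.
apply: (gen_nbhd_mono (P := fun h => is_aut_on Y h /\ O (h y))) => [h _ []//|].
by apply: gen_nbhd_subbasic; [exists y, O | split].
Qed.

Lemma order_open_lt (a : T) : order_open (fun _ => True) (fun z => z < a).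
Proof. by apply: gen_open_subbasic => //; exists a => //; left=> z; tauto. Qed.

Lemma order_open_gt (a : T) : order_open (fun _ => True) (fun z => a < z).
Proof. by apply: gen_open_subbasic => //; exists a => //; right=> z; tauto. Qed.

Lemma ray_trace_nbhd Y V z : ray_subbasis Y V -> V z ->
  gen_nbhd (fun _ => True) (ray_subbasis (fun _ => True)) z (fun w => Y w -> V w).
Proof.
move=> [a _ [eV|eV]] /eV [_ za].
  apply: (gen_nbhd_mono (P := fun w => w < a)) => [w _ wa Yw|]; first exact/eV.
  by apply: gen_nbhd_subbasic => //; exists a => //; left=> w; tauto.
apply: (gen_nbhd_mono (P := fun w => a < w)) => [w _ aw Yw|]; first exact/eV.
by apply: gen_nbhd_subbasic => //; exists a => //; right=> w; tauto.
Qed.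

Lemma order_open_trace Y O z : order_open Y O -> O z ->
  exists O', [/\ order_open (fun _ => True) O', O' z & forall w, O' w -> Y w -> O w].
Proof.
move=> [_ oO] Oz; have [s [sS sz sO]] := oO z Oz.
suff : gen_nbhd (fun _ => True) (ray_subbasis (fun _ => True)) z (fun w => Y w -> O w).
  by move/(gen_nbhd_interior I).
have := gen_nbhd_all (fun V Vs => ray_trace_nbhd (sS V Vs) (sz V Vs)).
by apply: gen_nbhd_mono => w _ sw Yw; apply: sO => // V /sw; apply.
Qed.

Lemma order_open_convex_trace Y O : convex Y -> order_open (fun _ => True) O ->
  order_open Y (fun z => Y z /\ O z).
Proof.
move=> cY oO; apply: (gen_open_preimage (phi := id) (gen_openT _ _) _ _ oO) => //.
move=> V a [c _ eV] Ya Va; have [Yc|nYc] := classic (Y c).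
  case: eV Va => eV /eV [_ ac].
    apply: (gen_nbhd_mono (P := fun w => Y w /\ w < c)) => [b _ [_ bc] _|].
      exact/eV.
    by apply: gen_nbhd_subbasic => //; exists c => //; left.
  apply: (gen_nbhd_mono (P := fun w => Y w /\ c < w)) => [b _ [_ cb] _|].
    exact/eV.
  by apply: gen_nbhd_subbasic => //; exists c => //; right.
suff YV : forall b, Y b -> V b.
  by apply: gen_nbhd_mono (gen_nbhdT _ _ a) => b _ _; apply: YV.
case: (convex_side cY Ya nYc) => side; case: eV Va => eV /eV [_ ac] b Yb;
  apply/eV; split=> //; by [apply: side | case: (lt_nsym ac (side a Ya))].
Qed.

Lemma tau_d_agreeP Y U : tau_d Y U <->
  (forall g, U g -> is_aut_on Y g) /\
  (forall g, U g -> exists s : seq T,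
     forall h, is_aut_on Y h -> (forall y, List.In y s -> h y = g y) -> U h).
Proof.
split=> -[UY oU]; split=> // g Ug; have ag := UY g Ug.
  have [s [_ sU]] := oU g Ug; exists s => h ah hs.
  have [g' [ag' gK g'K]] := aut_on_inv ag.
  have -> : h = g \o (g' \o h) by apply: functional_extensionality => x /=; rewrite g'K.
  by apply: sU => [|y ys]; [exact: aut_on_comp | rewrite /= hs ?gK].
have [s sU] := oU g Ug; have [s' [s'Y ss']] := list_trace Y s.
exists s'; split=> // h ah hs'; apply: sU => [|y ys /=]; first exact: aut_on_comp.
have [Yy|nYy] := classic (Y y); first by rewrite hs' //; apply: ss'.
by rewrite (aut_on_out ah nYy).
Qed.

Lemma tau_d_agree Y (s : seq T) k0 :
  tau_d Y (fun k => is_aut_on Y k /\ forall y, List.In y s -> k y = k0 y).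
Proof.
apply/tau_d_agreeP; split=> [k []//|k [ak sk]]; exists s => h ah hs.
by split=> // y ys; rewrite hs ?sk.
Qed.

End Automorphisms.

(** * Splitting along J^-, J and J^+ *)

Inductive region := Below | Inside | Above.

Section Decomposition.
Variables (d : Order.disp_t) (T : orderType d) (J : T -> Prop).
Hypothesis J_interval : is_interval J.

Definition part r : T -> Prop :=
  match r with Below => lower J | Inside => J | Above => upper J end.

Definition proj r (p : triple T) : T -> T :=
  match r with Below => p.1.1 | Inside => p.1.2 | Above => p.2 end.

Local Notation I3 := (in3 (is_aut_on (lower J)) (is_aut_on J) (is_aut_on (upper J))).

Definition restrict3 (g : T -> T) : triple T :=
  (restr (lower J) g, restr J g, restr (upper J) g).

Definition compose3 (p : triple T) : T -> T :=
  proj Below p \o proj Inside p \o proj Above p.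

Lemma in3P p : I3 p <-> forall r, is_aut_on (part r) (proj r p).
Proof.
split=> [[? ? ?] []//|ap].
by split; [exact: (ap Below)|exact: (ap Inside)|exact: (ap Above)].
Qed.

Lemma proj_inj p q : (forall r, proj r p = proj r q) -> p = q.
Proof.
case: p q => [[p1 p2] p3] [[q1 q2] q3] e.
by move: (e Below) (e Inside) (e Above) => /= -> -> ->.
Qed.

Lemma proj_restrict3 r g : proj r (restrict3 g) = restr (part r) g.
Proof. by case: r. Qed.

Lemma proj_mul3 r p q : proj r (mul3 p q) = proj r p \o proj r q.
Proof. by case: r. Qed.

Lemma part_convex r : convex (part r).
Proof.
case: r => x y z /=.
- by move=> _ zJ _ yz w Jw; apply: le_lt_trans yz (zJ w Jw).
- exact: J_interval.2.
- by move=> Jx _ xy _ w Jw; apply: lt_le_trans (Jx w Jw) xy.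
Qed.
(* [convex] unfolds to a product, which would otherwise make [r] implicit. *)
Arguments part_convex : clear implicits.

Lemma part_cover t : exists r, part r t.
Proof.
have [lowt|nlt] := classic (lower J t); first by exists Below.
have [upt|nut] := classic (upper J t); first by exists Above.
exists Inside.
have [a Ja le_at] : exists2 a, J a & a <= t.
  apply: NNPP => na; apply: nlt => a Ja; rewrite ltNge; apply/negP => le_at.
  by apply: na; exists a.
have [b Jb le_tb] : exists2 b, J b & t <= b.
  apply: NNPP => nb; apply: nut => b Jb; rewrite ltNge; apply/negP => le_tb.
  by apply: nb; exists b.
exact: J_interval.2 Ja Jb le_at le_tb.
Qed.

Lemma part_disjoint r r' t : part r t -> part r' t -> r = r'.
Proof.
have [x Jx] := J_interval.1.
case: r; case: r' => //= h1 h2; suff : t < t by rewrite ltxx.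
all: first [exact: h1 _ h2 | exact: h2 _ h1
           | exact: lt_trans (h1 x Jx) (h2 x Jx) | exact: lt_trans (h2 x Jx) (h1 x Jx)].
Qed.

Lemma compose3_part p r y : I3 p -> part r y -> compose3 p y = proj r p y.
Proof.
move=> /in3P ap ry.
have fixes r' z : part r z -> r' <> r -> proj r' p z = z.
  by move=> rz r'r; apply: (aut_on_out (ap r')) => /part_disjoint/(_ rz).
have ryr := aut_on_in (ap r) ry.
change (proj Below p (proj Inside p (proj Above p y)) = proj r p y).
case: r ry ryr fixes => ry ryr fixes.
- by rewrite (fixes Above) // (fixes Inside).
- by rewrite (fixes Above) // (fixes Below).
- by rewrite (fixes Inside) // (fixes Below).
Qed.

Lemma compose3_aut p : I3 p -> is_aut (compose3 p).
Proof.
move=> /in3P ap; have aut r := aut_on_convex (part_convex r) (ap r).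
exact: aut_on_comp (aut_on_comp (aut Below) (aut Inside)) (aut Above).
Qed.

Lemma compose3_eq p q y : I3 p -> I3 q -> (forall r, proj r p y = proj r q y) ->
  compose3 p y = compose3 q y.
Proof.
move=> ip iq pq; have [r ry] := part_cover y.
by rewrite (compose3_part ip ry) (compose3_part iq ry).
Qed.

Hypothesis J_regular : regular_int J.
Local Notation H := (setstab J).

Lemma setstab_of_point g x : is_aut g -> J x -> J (g x) -> H g.
Proof. by move=> ag Jx Jgx; split=> // y Jy; apply: J_regular Jx Jy ag Jgx. Qed.

Lemma setstab_comp g h : H g -> H h -> H (g \o h).
Proof. by move=> [ag gJ] [ah hJ]; split=> [|x /hJ/gJ //]; apply: aut_on_comp. Qed.

Lemma setstab_of_cancel g g' : H g -> cancel g g' -> cancel g' g -> H g'.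
Proof.
move=> [ag gJ] gK g'K; have [x Jx] := J_interval.1.
apply: (setstab_of_point (x := g x)); first exact: aut_on_of_cancel ag gK g'K.
  exact: gJ.
by rewrite gK.
Qed.

Lemma setstab_subgroup : subgroup (@is_aut d T) H.
Proof.
split=> [g []//| |g h|g g'].
- by split=> //; apply: aut_on_id.
- exact: setstab_comp.
- exact: setstab_of_cancel.
Qed.

Lemma setstab_J g x : H g -> J (g x) <-> J x.
Proof.
move=> Hg; split=> [Jgx|]; last exact: Hg.2.
have [g' [ag' gK g'K]] := aut_on_inv Hg.1.
by rewrite -(gK x); apply: (setstab_of_cancel Hg gK g'K).2.
Qed.

Lemma setstab_part g r x : H g -> part r (g x) <-> part r x.
Proof.
move=> Hg; have gJ z := setstab_J z Hg.
by case: r => /=; [exact: aut_lower Hg.1 gJ | exact: gJ | exact: aut_upper Hg.1 gJ].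
Qed.

Lemma setstab_restr g r : H g -> is_aut_on (part r) (restr (part r) g).
Proof. by move=> Hg; apply: restr_aut_on Hg.1 _ => x; apply: setstab_part. Qed.

Lemma restrict3_in3 g : H g -> I3 (restrict3 g).
Proof. by move=> Hg; apply/in3P => r; rewrite proj_restrict3; apply: setstab_restr. Qed.

Lemma compose3_setstab p : I3 p -> H (compose3 p).
Proof.
move=> ip; split=> [|x Jx]; first exact: compose3_aut.
by rewrite (compose3_part (r := Inside)) //; apply: (aut_on_in ((in3P p).1 ip Inside)).
Qed.

Lemma restrict3K g : H g -> compose3 (restrict3 g) = g.
Proof.
move=> Hg; apply: functional_extensionality => x; have [r rx] := part_cover x.
by rewrite (compose3_part (restrict3_in3 Hg) rx) proj_restrict3 restr_in.
Qed.

Lemma compose3K p : I3 p -> restrict3 (compose3 p) = p.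
Proof.
move=> ip; apply: proj_inj => r; rewrite proj_restrict3.
by apply: restr_aut_onE ((in3P p).1 ip r) _ => y; apply: compose3_part.
Qed.

Lemma restrict3_mul g h : H g -> H h ->
  restrict3 (g \o h) = mul3 (restrict3 g) (restrict3 h).
Proof.
move=> Hg Hh; apply: proj_inj => r; rewrite proj_mul3 !proj_restrict3.
by apply: restr_comp => x /(setstab_part r x Hh).2.
Qed.

Lemma setstab_iso3 oH oP :
  (forall O, oP O -> oH (fun g => H g /\ O (restrict3 g))) ->
  (forall O, oH O -> oP (fun p => I3 p /\ O (compose3 p))) ->
  topgrp_iso3 H oH (is_aut_on (lower J)) (is_aut_on J) (is_aut_on (upper J)) oP
    restrict3 compose3.
Proof.
move=> restrict3_cont compose3_cont; split; split.
all: first [exact: restrict3_in3 | exact: compose3_setstab | exact: restrict3K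
           | exact: compose3K | exact: restrict3_mul | done].
Qed.

Lemma stabilizer_decomposition x : J x -> forall g,
  (is_aut g /\ g x = x) <->
  (exists g1 g2 g3, [/\ is_aut_on (lower J) g1, is_aut_on J g2, g2 x = x,
                        is_aut_on (upper J) g3 & g = g1 \o g2 \o g3]).
Proof.
move=> Jx g; split=> [[ag gx]|[g1 [g2 [g3 [a1 a2 g2x a3 ->]]]]].
  have Hg : H g by apply: (setstab_of_point ag Jx); rewrite gx.
  have [a1 a2 a3] := restrict3_in3 Hg.
  exists (restr (lower J) g), (restr J g), (restr (upper J) g).
  by split=> //; [rewrite restr_in | rewrite -{1}(restrict3K Hg)].
have ip : I3 (g1, g2, g3) by [].
split; first exact: compose3_aut ip.
by change (compose3 (g1, g2, g3) x = x); rewrite (compose3_part (r := Inside) ip).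
Qed.

Local Notation prod3_top top :=
  (prod3_open (is_aut_on (lower J)) (is_aut_on J) (is_aut_on (upper J))
              (top (lower J)) (top J) (top (upper J))).

Definition prod3_subbasis (top : (T -> Prop) -> ((T -> T) -> Prop) -> Prop)
    (W : triple T -> Prop) : Prop :=
  exists O, [\/ top (lower J) O /\ (forall p, W p <-> (I3 p /\ O p.1.1)),
                top J O /\ (forall p, W p <-> (I3 p /\ O p.1.2))
              | top (upper J) O /\ (forall p, W p <-> (I3 p /\ O p.2))].

Lemma prod3_subbasisP top W : prod3_subbasis top W <->
  exists r O, top (part r) O /\ (forall p, W p <-> I3 p /\ O (proj r p)).
Proof.
split=> [[O [[tO eW]|[tO eW]|[tO eW]]]|[[] [O [tO eW]]]].
- by exists Below, O.
- by exists Inside, O.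
- by exists Above, O.
- by exists O; apply: Or31.
- by exists O; apply: Or32.
- by exists O; apply: Or33.
Qed.

Lemma prod3_nbhd_cyl top r O p : top (part r) O -> I3 p -> O (proj r p) ->
  gen_nbhd I3 (prod3_subbasis top) p (fun q => O (proj r q)).
Proof.
move=> tO ip Op.
apply: (gen_nbhd_mono (P := fun q => I3 q /\ O (proj r q))) => [q _ []//|].
by apply: gen_nbhd_subbasic => //; apply/prod3_subbasisP; exists r, O.
Qed.

Lemma setstab_open_d : tau_d (fun _ => True) H.
Proof.
have [x0 Jx0] := J_interval.1.
apply/tau_d_agreeP; split=> [g []//|g Hg]; exists [:: x0] => h ah hx0.
by apply: (setstab_of_point ah Jx0); rewrite hx0; [exact: Hg.2 | left].
Qed.

Lemma restrict3_cyl_d W g : prod3_subbasis (@tau_d d T) W -> H g -> W (restrict3 g) ->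
  exists l : seq T,
    forall h, H h -> (forall y, List.In y l -> h y = g y) -> W (restrict3 h).
Proof.
move=> /prod3_subbasisP [r [O [/tau_d_agreeP [_ oO] eW]]] Hg /eW [_].
rewrite proj_restrict3 => /oO [l lO]; exists l => h Hh hg.
apply/eW; split; first exact: restrict3_in3.
rewrite proj_restrict3; apply: lO => [|y /hg]; first exact: setstab_restr.
exact: restr_agree.
Qed.

Lemma restrict3_cont_d O : prod3_top (@tau_d d T) O ->
  sub_open H (tau_d (fun _ => True)) (fun g => H g /\ O (restrict3 g)).
Proof.
move=> [_ oO]; exists (fun g => H g /\ O (restrict3 g)); last by move=> g; tauto.
have [x0 Jx0] := J_interval.1.
apply/tau_d_agreeP; split=> [g [[]]//|g [Hg Og]].
have [s [sS sg sO]] := oO _ Og.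
have [l lW] : exists l, forall W, List.In W s ->
    forall h, H h -> (forall y, List.In y l -> h y = g y) -> W (restrict3 h).
  apply: list_choice_mono => [W l l' Wl ll' h Hh hl'|W Ws].
    by apply: Wl => // y /ll'/hl'.
  exact: restrict3_cyl_d (sS W Ws) Hg (sg W Ws).
exists (x0 :: l) => h ah hx0l.
have Hh : H h by apply: (setstab_of_point ah Jx0); rewrite hx0l; [exact: Hg.2 | left].
split=> //; apply: sO => [|W Ws]; first exact: restrict3_in3.
by apply: lW => // y yl; apply: hx0l; right.
Qed.

Lemma compose3_cont_d U : sub_open H (tau_d (fun _ => True)) U ->
  prod3_top (@tau_d d T) (fun p => I3 p /\ U (compose3 p)).
Proof.
move=> [V /tau_d_agreeP [_ oV] eU]; split=> [p []//|p [ip /eU [_ /oV [s sV]]]].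
have agree r : gen_nbhd I3 (prod3_subbasis (@tau_d d T)) p (fun q =>
    is_aut_on (part r) (proj r q) /\ forall y, List.In y s -> proj r q y = proj r p y).
  apply: (prod3_nbhd_cyl (top := @tau_d d T) (tau_d_agree (part r) s (proj r p)) ip).
  by split=> //; apply: (in3P p).1.
have := gen_nbhdI (gen_nbhdI (agree Below) (agree Inside)) (agree Above).
apply: gen_nbhd_mono => q iq [[[_ e1] [_ e2]] [_ e3]].
split=> //; apply/eU; split; first exact: compose3_setstab.
apply: sV => [|y ys]; first exact: compose3_aut.
by apply: compose3_eq => // -[]; [exact: e1 | exact: e2 | exact: e3].
Qed.

Hypotheses (X_homogeneous : homogeneous T) (J_proper : proper_int J).

Lemma interval_unbounded x : J x ->
  (exists2 a, J a & a < x) /\ (exists2 b, J b & x < b).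
Proof.
move=> Jx; have [y Jy yx] : exists2 y, J y & y != x.
  apply: NNPP => none; apply: J_proper.1; exists x => y; split=> [Jy|->//].
  by apply: NNPP => yx; apply: none; exists y => //; apply/eqP.
have [g ag gx] := X_homogeneous x y.
have Hg : H g by apply: (setstab_of_point ag Jx); rewrite gx.
(* With g x = y, the point g^-1 x of J lies on the other side of x from y. *)
have [g' [_ gK g'K]] := aut_on_inv ag.
have Jg'x : J (g' x) := (setstab_of_cancel Hg gK g'K).2 x Jx.
have ltE u v : (u < v) = (g u < g v) by rewrite (aut_on_lt ag).
case: (ltgtP y x) yx => // [yx|xy] _.
  by split; [exists y | exists (g' x); rewrite // ltE g'K gx].
by split; [exists (g' x); rewrite // ltE g'K gx | exists y].
Qed.

Lemma setstab_open_p : tau_p (fun _ => True) H.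
Proof.
split=> [g []//|g Hg]; have [x0 Jx0] := J_interval.1.
have [[a Ja ag0] [b Jb g0b]] := interval_unbounded (Hg.2 x0 Jx0).
have := gen_nbhdI (tau_p_nbhd_eval I (order_open_gt a) Hg.1 ag0)
                  (tau_p_nbhd_eval I (order_open_lt b) Hg.1 g0b).
apply: gen_nbhd_mono => h ah [ah0 h0b]; apply: (setstab_of_point ah Jx0).
exact: J_interval.2 Ja Jb (ltW ah0) (ltW h0b).
Qed.

Lemma restr_cont_p r O : tau_p (part r) O ->
  tau_p (fun _ => True) (fun g => H g /\ O (restr (part r) g)).
Proof.
move=> oO; apply: (gen_open_preimage setstab_open_p _ _ oO) => [g|V g].
  exact: setstab_restr.
move=> [y [O' [ry oO' eV]]] Hg /eV [_]; rewrite restr_in // => O'gy.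
have [O3 [oO3 O3gy O3O']] := order_open_trace oO' O'gy.
apply: gen_nbhd_mono (tau_p_nbhd_eval I oO3 Hg.1 O3gy) => h _ O3hy Hh.
have ryh : part r (h y) by apply/(setstab_part r y Hh).
by apply/eV; split; [exact: setstab_restr | rewrite restr_in //; apply: O3O'].
Qed.

Lemma restrict3_cont_p O : prod3_top (@tau_p d T) O ->
  sub_open H (tau_p (fun _ => True)) (fun g => H g /\ O (restrict3 g)).
Proof.
move=> oO; exists (fun g => H g /\ O (restrict3 g)); last by move=> g; tauto.
apply: (gen_open_preimage (S2 := prod3_subbasis (@tau_p d T))
                          setstab_open_p restrict3_in3 _ oO).
move=> W g /prod3_subbasisP [r [O' [oO' eW]]] Hg /eW [_]; rewrite proj_restrict3 => O'g.
apply: gen_nbhd_mono ((restr_cont_p oO').2 g (conj Hg O'g)) => h _ [Hh O'h] _.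
by apply/eW; rewrite proj_restrict3; split=> //; exact: restrict3_in3.
Qed.

Lemma compose3_cont_p U : sub_open H (tau_p (fun _ => True)) U ->
  prod3_top (@tau_p d T) (fun p => I3 p /\ U (compose3 p)).
Proof.
move=> [V oV eU].
apply: (gen_open_ext (U := fun p => I3 p /\ V (compose3 p))).
  move=> p; split=> -[ip Up]; split=> //; last by case/eU: Up.
  by apply/eU; split=> //; exact: compose3_setstab.
apply: (gen_open_preimage (gen_openT _ _) (fun p ip => compose3_aut ip) _ oV).
move=> W p [y [O [_ oO eW]]] ip /eW [_ Opy].
have [r ry] := part_cover y.
have cyl : tau_p (part r) (fun k => is_aut_on (part r) k /\ (part r (k y) /\ O (k y))).
  apply: gen_open_subbasic => [|k []//]; exists y, (fun z => part r z /\ O z).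
  by split=> //; apply: order_open_convex_trace (part_convex r) oO.
have apr := (in3P p).1 ip r.
apply: gen_nbhd_mono (prod3_nbhd_cyl cyl ip _) => [q iq [_ [_ Oqy]] _|].
  by apply/eW; split; [exact: compose3_aut | rewrite (compose3_part iq ry)].
by split=> //; split; [exact: aut_on_in apr ry | rewrite -(compose3_part ip ry)].
Qed.

End Decomposition.

Arguments compose3 {d T}.

Theorem proposition5p1 (d : Order.disp_t) (T : orderType d) (J : T -> Prop) :
  homogeneous T -> is_interval J -> regular_int J -> proper_int J ->
  let H := setstab J in
  let AX := @is_aut d T in
  let Jm := lower J in
  let Jp := upper J in
  (* (1) *)
  (subgroup AX H /\ tau_p (fun _ => True) H /\ tau_d (fun _ => True) H) /\
  (* (2) *)
  (exists f f',
     topgrp_iso3 H (sub_open H (tau_p (fun _ => True)))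
       (is_aut_on Jm) (is_aut_on J) (is_aut_on Jp)
       (prod3_open (is_aut_on Jm) (is_aut_on J) (is_aut_on Jp)
                   (tau_p Jm) (tau_p J) (tau_p Jp)) f f') /\
  (exists f f',
     topgrp_iso3 H (sub_open H (tau_d (fun _ => True)))
       (is_aut_on Jm) (is_aut_on J) (is_aut_on Jp)
       (prod3_open (is_aut_on Jm) (is_aut_on J) (is_aut_on Jp)
                   (tau_d Jm) (tau_d J) (tau_d Jp)) f f') /\
  (* (3) *)
  (forall x, J x -> forall g : T -> T,
     (AX g /\ g x = x) <->
     (exists g1 g2 g3, [/\ is_aut_on Jm g1, is_aut_on J g2, g2 x = x,
                           is_aut_on Jp g3 & g = g1 \o g2 \o g3])).
Proof.
move=> hom hint hreg hprop /=.
have iso3 := setstab_iso3 hint hreg.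
split; [|split; [|split]].
- split; first exact: setstab_subgroup.
  by split; [exact: setstab_open_p | exact: setstab_open_d].
- by exists (restrict3 J), compose3; apply: iso3;
    [exact: restrict3_cont_p | exact: compose3_cont_p].
- by exists (restrict3 J), compose3; apply: iso3;
    [exact: restrict3_cont_d | exact: compose3_cont_d].
- exact: stabilizer_decomposition hint hreg.
Qed.
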